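(* Let $\rho=\sum_{i=0}^n\lambda_i|D_n^i\rangle\langle D_n^i|$ with $\lambda_i\ge0$, $\sum_i\lambda_i=1$. If $n\ge2$, then $\rho_{[2]}$ is PPT if and only if $$\Big[\sum_{i=0}^n(n-i)(n-i-1)\lambda_i\Big]\Big[\sum_{i=0}^n i(i-1)\lambda_i\Big]-\Big[\sum_{i=0}^n i(n-i)\lambda_i\Big]^2\ge0.$$ If $n\ge3$, then $\rho_{[3]}$ is PPT if and only if both $$\Big[\sum_{i=0}^n(n-i)(n-i-1)(n-i-2)\lambda_i\Big]\Big[\sum_{i=0}^n i(i-1)(n-i)\lambda_i\Big]-\Big[\sum_{i=0}^n i(n-i)(n-i-1)\lambda_i\Big]^2\ge0$$ and $$\Big[\sum_{i=0}^n i(n-i)(n-i-1)\lambda_i\Big]\Big[\sum_{i=0}^n i(i-1)(i-2)\lambda_i\Big]-\Big[\sum_{i=0}^n i(i-1)(n-i)\lambda_i\Big]^2\ge0.$$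
   Context: $\rho_{[k]}$ denotes the partial trace of $\rho$ over qubits $k+1,\dots,n$. Dicke states: $|D_n^i\rangle=\binom{n}{i}^{-1/2}\sum_{s\in\{0,1\}^n,\ \sum_js_j=i}|s_1\rangle\otimes\cdots\otimes|s_n\rangle$. An $m$-qubit state whose range lies in the subspace of vectors invariant under swapping any two qubits (a symmetric state) is called PPT if its partial transpose with respect to $\lfloor m/2\rfloor$ of its qubits is positive semidefinite. *)

From HB Require Import structures.
From mathcomp Require Import all_boot all_order all_algebra.
Set Implicit Arguments.
Unset Strict Implicit.
Unset Printing Implicit Defensive.
Import Order.TTheory GRing.Theory Num.Theory.
Local Open Scope ring_scope.

(* Operators on qubit systems: a matrix indexed by bit strings (seq bool).
   An m-qubit operator is only ever evaluated at indices of size m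
   (the computational basis |s_1 ... s_m>, s_j in {0,1}, bool true = 1). *)

Definition psd (C : numClosedFieldType) (m : nat)
  (M : seq bool -> seq bool -> C) : Prop :=
  forall v : m.-tuple bool -> C,
    0 <= \sum_(a : m.-tuple bool) \sum_(b : m.-tuple bool)
           (v a)^* * M a b * v b.

Definition ptrace (C : numClosedFieldType) (n k : nat)
  (M : seq bool -> seq bool -> C) : seq bool -> seq bool -> C :=
  fun a b => \sum_(t : (n - k).-tuple bool) M (a ++ t) (b ++ t).

Definition ptranspose (C : numClosedFieldType) (p : nat)
  (M : seq bool -> seq bool -> C) : seq bool -> seq bool -> C :=
  fun a b => M (take p b ++ drop p a) (take p a ++ drop p b).

(* PPT for an m-qubit (symmetric) state: partial transpose w.r.t.
   floor(m/2) of its qubits (here: the first floor(m/2)) is PSD. *)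
Definition PPT (C : numClosedFieldType) (m : nat)
  (M : seq bool -> seq bool -> C) : Prop :=
  psd m (ptranspose m./2 M).

Definition dicke (C : numClosedFieldType) (n i : nat) (s : seq bool) : C :=
  if (size s == n) && (count id s == i)
  then sqrtC (('C(n, i))%:R^-1) else 0.

Definition dicke_mixture (C : numClosedFieldType) (n : nat)
  (lam : 'I_n.+1 -> C) : seq bool -> seq bool -> C :=
  fun s t => \sum_(i < n.+1) lam i * (dicke C n i s * (dicke C n i t)^*).

From HB Require Import structures.
From mathcomp Require Import all_boot all_order all_algebra ring zify.
Set Implicit Arguments.
Unset Strict Implicit.
Unset Printing Implicit Defensive.
Import Order.TTheory GRing.Theory Num.Theory.

(* The partial trace of rho over all but k qubits is again permutation
   invariant: its entry at basis states a, b depends only on whether a and b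
   carry the same number c of ones, and is then a weight w_k(c) obtained by
   counting the completions of a to a string with i ones.  After the partial
   transpose on the first qubit the matrix splits into diagonal entries and
   2x2 blocks [w_k(c), w_k(c+1); w_k(c+1), w_k(c+2)], so PPT is equivalent to
   w_k(c+1)^2 <= w_k(c) w_k(c+2).  Finally n^_k w_k(c) is the moment
   sum_i i^_c (n-i)^_(k-c) lam_i, which gives the stated determinants. *)

Lemma big_tuple_cons (R : nmodType) (T : finType) m (F : m.+1.-tuple T -> R) :
  (\sum_(t : m.+1.-tuple T) F t = \sum_(x : T) \sum_(t : m.-tuple T) F [tuple of x :: t])%R.
Proof.
rewrite pair_big /= (reindex (fun p : T * m.-tuple T => [tuple of p.1 :: p.2])) //=.
exists (fun t => (thead t, [tuple of behead t])) => [[x t] _ | t _] /=.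
  by rewrite theadE; congr pair; apply: val_inj.
by rewrite [in RHS](tuple_eta t).
Qed.

Lemma big_tuple0 (R : nmodType) (T : finType) (F : 0.-tuple T -> R) :
  (\sum_(t : 0.-tuple T) F t)%R = F [tuple].
Proof. by rewrite (big_pred1 [tuple]) // => t; rewrite (tuple0 t) /= eqxx. Qed.

Lemma sum_count_tuple m c i :
  \sum_(t : m.-tuple bool) (c + count id t == i) = (c <= i) * 'C(m, i - c).
Proof.
elim: m c => [|m IHm] c.
  rewrite big_tuple0 /= addn0; case: ltngtP => [ci|ic|->] //=.
  - by rewrite bin0n subn_eq0 leqNgt ci.
  - by rewrite subnn.
rewrite big_tuple_cons big_bool /=.
under eq_bigr do rewrite addnA addn1.
rewrite !IHm; case: ltngtP => [ci|ic|->] /=.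
- by rewrite !mul1n -[in RHS](subnSK ci) binS (subnSK ci) addnC.
- by rewrite !mul0n.
- by rewrite subnn !bin0 mul0n.
Qed.

Lemma bin_ffact_split n k c i : c <= k <= n ->
  (c <= i) * 'C(n - k, i - c) * n ^_ k = 'C(n, i) * (i ^_ c * (n - i) ^_ (k - c)).
Proof.
case/andP=> ck kn; have [ci|ic] := leqP c i; last by rewrite (ffact_small ic) muln0 mul0n.
rewrite mul1n; have [hj|hj] := leqP (i - c) (n - k); last first.
  rewrite bin_small //; have [ni|ni] := leqP i n; last by rewrite bin_small.
  by rewrite (ffact_small (_ : n - i < k - c)) ?muln0 //; lia.
have le_in : i <= n by lia.
have le_kc : k - c <= n - i by lia.
have rest : n - k - (i - c) = n - i - (k - c) by lia.
apply/eqP; rewrite -(eqn_pmul2r (_ : 0 < (i - c)`! * (n - i - (k - c))`! * (n - k)`!));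
  last by rewrite !muln_gt0 !fact_gt0.
have -> : 'C(n - k, i - c) * n ^_ k * ((i - c)`! * (n - i - (k - c))`! * (n - k)`!)
          = n`! * (n - k)`!.
  by rewrite -(ffact_fact kn) -(bin_fact hj) rest; nia.
by rewrite -(bin_fact le_in) -(ffact_fact ci) -(ffact_fact le_kc); apply/eqP; nia.
Qed.

Local Open Scope ring_scope.

Section Algebra.
Variable C : numClosedFieldType.

Lemma natr_ffact (x c : nat) : (x ^_ c)%:R = \prod_(j < c) (x%:R - j%:R) :> C.
Proof.
elim: c => [|c IHc]; first by rewrite big_ord0.
rewrite ffactnSr natrM IHc big_ord_recr /=; have [cx|xc] := leqP c x; first by rewrite natrB.
by rewrite -IHc ffact_small // !mul0r.
Qed.

Definition qform (p q r x y : C) :=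
  p * (x * x^*) + q * (x^* * y + y^* * x) + r * (y * y^*).

Lemma qform_ge0P (p q r : C) : 0 <= p -> 0 <= q -> 0 <= r ->
  (forall x y, 0 <= qform p q r x y) <-> q ^+ 2 <= p * r.
Proof.
move=> p0 q0 r0.
have [-> | pn0] := eqVneq p 0; split => [Hq | Hpr x y].
- have := Hq (- (r + 1)) q; rewrite /qform !rmorphN rmorphD /= conjC1 !geC0_conj //.
  have -> : 0 * (- (r + 1) * - (r + 1)) + q * (- (r + 1) * q + q * - (r + 1)) + r * (q * q)
          = - (q ^+ 2 * (r + 2)) by ring.
  by rewrite oppr_ge0 mul0r pmulr_lle0 // ltr_wpDl.
- have /eqP -> : q == 0.
    by rewrite -sqrf_eq0 eq_le (exprn_ge0 2 q0) andbT -(mul0r r).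
  by rewrite /qform !mul0r !add0r mulr_ge0 ?mul_conjC_ge0.
- have p_gt0 : 0 < p by rewrite lt_def pn0 p0.
  have := Hq q (- p); rewrite /qform !rmorphN /= !geC0_conj //.
  have -> : p * (q * q) + q * (q * - p + - p * q) + r * (- p * - p)
          = p * (p * r - q ^+ 2) by ring.
  by rewrite pmulr_rge0 // subr_ge0.
- have p_gt0 : 0 < p by rewrite lt_def pn0 p0.
  rewrite -(pmulr_rge0 _ p_gt0).
  (* completing the square *)
  have -> : p * qform p q r x y
          = (p * x + q * y) * (p * x + q * y)^* + (p * r - q ^+ 2) * (y * y^*).
    by rewrite rmorphD !rmorphM /= (geC0_conj p0) (geC0_conj q0) /qform; ring.
  by rewrite addr_ge0 ?mul_conjC_ge0 // mulr_ge0 ?mul_conjC_ge0 ?subr_ge0.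
Qed.

Lemma sqr_le_mul_scaleP (D p q r Sp Sq Sr : C) : 0 < D ->
  Sp = D * p -> Sq = D * q -> Sr = D * r ->
  q ^+ 2 <= p * r <-> 0 <= Sp * Sr - Sq ^+ 2.
Proof.
move=> D_gt0 -> -> ->; have -> : D * p * (D * r) - (D * q) ^+ 2 = D ^+ 2 * (p * r - q ^+ 2).
  by ring.
by rewrite pmulr_rge0 ?exprn_gt0 // subr_ge0.
Qed.

Definition bits2 (a b : bool) : 2.-tuple bool := [tuple of a :: [tuple of b :: [tuple]]].

Lemma sum_bits2 (F : 2.-tuple bool -> C) :
  \sum_(t : 2.-tuple bool) F t
  = F (bits2 true true) + F (bits2 true false) + F (bits2 false true) + F (bits2 false false).
Proof. by rewrite !(big_tuple_cons, big_bool) !big_tuple0 /= addrA. Qed.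

Definition bits3 (a b c : bool) : 3.-tuple bool := [tuple of a :: bits2 b c].

Lemma sum_bits3 (F : 3.-tuple bool -> C) :
  \sum_(t : 3.-tuple bool) F t
  = F (bits3 true true true) + F (bits3 true true false)
    + F (bits3 true false true) + F (bits3 true false false)
    + F (bits3 false true true) + F (bits3 false true false)
    + F (bits3 false false true) + F (bits3 false false false).
Proof. by rewrite !(big_tuple_cons, big_bool) !big_tuple0 /= !addrA. Qed.

End Algebra.

Section DickeMixture.
Variables (C : numClosedFieldType) (n : nat) (lam : 'I_n.+1 -> C).
Hypothesis lam_ge0 : forall i, 0 <= lam i.

Definition dicke_weight k c : C :=
  \sum_(i < n.+1) lam i * (((c <= i) * 'C(n - k, i - c))%:R / 'C(n, i)%:R).

Lemma dicke_weight_ge0 k c : 0 <= dicke_weight k c.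
Proof. by apply: sumr_ge0 => i _; rewrite mulr_ge0 ?divr_ge0. Qed.

Lemma dicke_weight_mul_norm_ge0 k c x : 0 <= dicke_weight k c * (x * x^*).
Proof. by rewrite mulr_ge0 ?dicke_weight_ge0 ?mul_conjC_ge0. Qed.

Lemma ptrace_dicke_mixture k (a b : seq bool) :
  size a = k -> size b = k -> (k <= n)%N ->
  ptrace n k (dicke_mixture lam) a b
  = if count id a == count id b then dicke_weight k (count id a) else 0.
Proof.
move=> sa sb kn; rewrite /ptrace /dicke_mixture exchange_big /=.
have size_cat_n (s : seq bool) (t : (n - k).-tuple bool) : size s = k -> size (s ++ t) == n.
  by move=> ss; rewrite size_cat size_tuple ss subnKC.
have amplitude_norm i : sqrtC ('C(n, i)%:R^-1) * (sqrtC ('C(n, i)%:R^-1))^* = 'C(n, i)%:R^-1 :> C.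
  by rewrite geC0_conj ?sqrtC_ge0 ?invr_ge0 // -expr2 sqrtCK.
case: eqP => [eab|nab].
  apply: eq_bigr => i _; rewrite -mulr_sumr; congr (_ * _).
  rewrite -sum_count_tuple natr_sum mulr_suml; apply: eq_bigr => t _.
  rewrite /dicke !size_cat_n // !count_cat -eab /=; case: eqP => _; last by rewrite !mul0r.
  by rewrite amplitude_norm mul1r.
rewrite big1 // => i _; rewrite big1 ?mulr0 // => t _.
rewrite /dicke !size_cat_n // !count_cat /=.
case: eqP => ha; case: eqP => hb; rewrite ?conjC0 ?mul0r ?mulr0 //.
by case: nab; apply: (@addIn (count id t)); rewrite ha hb.
Qed.

Definition moment (f : C -> C) := \sum_(i < n.+1) f i%:R * lam i.

Lemma moment_dicke_weight k c (f : C -> C) :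
  (forall x, f x = \prod_(j < c) (x - j%:R) * \prod_(j < k - c) (n%:R - x - j%:R)) ->
  (c <= k <= n)%N -> moment f = (n ^_ k)%:R * dicke_weight k c.
Proof.
move=> Ef ckn; rewrite /moment /dicke_weight mulr_sumr; apply: eq_bigr => i _.
have Cn_neq0 : 'C(n, i)%:R != 0 :> C by rewrite pnatr_eq0 -lt0n bin_gt0 -ltnS.
have ffact_ni : ((n - i) ^_ (k - c))%:R = \prod_(j < k - c) (n%:R - i%:R - j%:R) :> C.
  by rewrite natr_ffact natrB // -ltnS.
rewrite Ef -natr_ffact -ffact_ni -natrM.
rewrite [RHS](_ : _ = lam i * ((c <= i) * 'C(n - k, i - c) * n ^_ k)%:R / 'C(n, i)%:R);
  last by rewrite natrM; ring.
by rewrite bin_ffact_split // !natrM; field.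
Qed.

Lemma ptranspose_ptrace2_form (v : 2.-tuple bool -> C) : (2 <= n)%N ->
  \sum_(a : 2.-tuple bool) \sum_(b : 2.-tuple bool)
     (v a)^* * ptranspose 1 (ptrace n 2 (dicke_mixture lam)) a b * v b
  = qform (dicke_weight 2 0) (dicke_weight 2 1) (dicke_weight 2 2)
      (v (bits2 false false)) (v (bits2 true true))
    + dicke_weight 2 1 * (v (bits2 false true) * (v (bits2 false true))^*)
    + dicke_weight 2 1 * (v (bits2 true false) * (v (bits2 true false))^*).
Proof.
move=> n2; rewrite !sum_bits2 /ptranspose /= !ptrace_dicke_mixture //= /qform.
by rewrite !(mulr0, mul0r, addr0, add0r); ring.
Qed.

Lemma ptranspose_ptrace3_form (v : 3.-tuple bool -> C) : (3 <= n)%N ->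
  \sum_(a : 3.-tuple bool) \sum_(b : 3.-tuple bool)
     (v a)^* * ptranspose 1 (ptrace n 3 (dicke_mixture lam)) a b * v b
  = qform (dicke_weight 3 0) (dicke_weight 3 1) (dicke_weight 3 2)
      (v (bits3 false false false)) (v (bits3 true false true) + v (bits3 true true false))
    + qform (dicke_weight 3 1) (dicke_weight 3 2) (dicke_weight 3 3)
      (v (bits3 false false true) + v (bits3 false true false)) (v (bits3 true true true))
    + dicke_weight 3 1 * (v (bits3 true false false) * (v (bits3 true false false))^*)
    + dicke_weight 3 2 * (v (bits3 false true true) * (v (bits3 false true true))^*).
Proof.
move=> n3; rewrite !sum_bits3 /ptranspose /= !ptrace_dicke_mixture //= /qform !rmorphD /=.
by rewrite !(mulr0, mul0r, addr0, add0r); ring.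
Qed.

Lemma ppt_ptrace2P : (2 <= n)%N ->
  PPT 2 (ptrace n 2 (dicke_mixture lam))
  <-> dicke_weight 2 1 ^+ 2 <= dicke_weight 2 0 * dicke_weight 2 2.
Proof.
move=> n2; rewrite /PPT /psd /= -qform_ge0P ?dicke_weight_ge0 //.
split=> [Hpsd x y | Hq v].
  have := Hpsd (fun a => if a == bits2 false false then x
                         else if a == bits2 true true then y else 0).
  by rewrite ptranspose_ptrace2_form //= conjC0 !(mulr0, mul0r, addr0).
rewrite ptranspose_ptrace2_form //; apply: addr_ge0; first apply: addr_ge0.
all: by [apply: Hq | apply: dicke_weight_mul_norm_ge0].
Qed.

Lemma ppt_ptrace3P : (3 <= n)%N ->
  PPT 3 (ptrace n 3 (dicke_mixture lam))
  <-> dicke_weight 3 1 ^+ 2 <= dicke_weight 3 0 * dicke_weight 3 2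
      /\ dicke_weight 3 2 ^+ 2 <= dicke_weight 3 1 * dicke_weight 3 3.
Proof.
move=> n3; rewrite /PPT /psd /= -!qform_ge0P ?dicke_weight_ge0 //.
have qform00 p q r : qform p q r 0 0 = 0 by rewrite /qform conjC0 !(mulr0, addr0).
split=> [Hpsd | [Hq1 Hq2] v].
  split=> x y.
  - have := Hpsd (fun a => if a == bits3 false false false then x
                           else if a == bits3 true false true then y else 0).
    by rewrite ptranspose_ptrace3_form //= conjC0 !(mulr0, mul0r, addr0, add0r, qform00).
  - have := Hpsd (fun a => if a == bits3 false false true then x
                           else if a == bits3 true true true then y else 0).
    by rewrite ptranspose_ptrace3_form //= conjC0 !(mulr0, mul0r, addr0, add0r, qform00).
rewrite ptranspose_ptrace3_form //; apply: addr_ge0; first apply: addr_ge0; first apply: addr_ge0.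
all: by [apply: Hq1 | apply: Hq2 | apply: dicke_weight_mul_norm_ge0].
Qed.

End DickeMixture.

Theorem mainTheorem14 (C : numClosedFieldType) (n : nat)
  (lam : 'I_n.+1 -> C)
  (lam_ge0 : forall i, 0 <= lam i)
  (lam_sum : \sum_(i < n.+1) lam i = 1) :
  let rho := @dicke_mixture C n lam in
  let N := (n%:R : C) in
  let S (f : C -> C) := \sum_(i < n.+1) f (i%:R) * lam i in
  ((2 <= n)%N ->
     (@PPT C 2 (@ptrace C n 2 rho) <->
      0 <= S (fun x => (N - x) * (N - x - 1)) * S (fun x => x * (x - 1))
           - (S (fun x => x * (N - x))) ^+ 2)) /\
  ((3 <= n)%N ->
     (@PPT C 3 (@ptrace C n 3 rho) <->
      (0 <= S (fun x => (N - x) * (N - x - 1) * (N - x - 2))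
              * S (fun x => x * (x - 1) * (N - x))
            - (S (fun x => x * (N - x) * (N - x - 1))) ^+ 2) /\
      (0 <= S (fun x => x * (N - x) * (N - x - 1))
              * S (fun x => x * (x - 1) * (x - 2))
            - (S (fun x => x * (x - 1) * (N - x))) ^+ 2))).
Proof.
move=> rho N S; have -> : S = moment lam by [].
have ffact_n_gt0 k : (k <= n)%N -> 0 < (n ^_ k)%:R :> C by rewrite ltr0n ffact_gt0.
have and_iff (A B A' B' : Prop) : (A <-> A') -> (B <-> B') -> (A /\ B <-> A' /\ B') by tauto.
split=> [n2|n3].
  rewrite ppt_ptrace2P //; apply: (sqr_le_mul_scaleP (ffact_n_gt0 2%N n2));
    by apply: (moment_dicke_weight lam) => [x|//]; rewrite !big_ord_recr !big_ord0 /=; ring.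
rewrite ppt_ptrace3P //; apply: and_iff; apply: (sqr_le_mul_scaleP (ffact_n_gt0 3%N n3));
  by apply: (moment_dicke_weight lam) => [x|//]; rewrite !big_ord_recr !big_ord0 /=; ring.
Qed.
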